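(* Let $n\ge 1$ and let $G$ be a bipartite multigraph consisting of $n$ matchings $M_1,\dots,M_n$ (not necessarily edge-disjoint), each with at least $2n$ edges. Then $G$ contains a rainbow matching with $n$ edges.
   Context: Each matching $M_i$ is a colour class (colour $i$); if the same pair of vertices is an edge of several $M_i$, these are treated as distinct parallel edges of different colours. A matching is rainbow if it contains at most one edge of each colour. *)

From mathcomp Require Import all_boot.
Set Implicit Arguments. Unset Strict Implicit. Unset Printing Implicit Defensive.

Definition is_matching (U V : finType) (M : {set U * V}) : Prop :=
  forall e f, e \in M -> f \in M -> e != f -> (e.1 != f.1) /\ (e.2 != f.2).

(* A rainbow matching with n edges in the multigraph formed by colour classes
   M_0, ..., M_{n-1}: one edge from each colour (so exactly one per colour,
   parallel edges of distinct colours being distinct), pairwise vertex-disjoint. *)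
Definition has_rainbow_matching_n (U V : finType) (n : nat)
    (M : 'I_n -> {set U * V}) : Prop :=
  exists f : 'I_n -> U * V,
    (forall i, f i \in M i) /\
    (forall i j, i != j -> ((f i).1 != (f j).1) /\ ((f i).2 != (f j).2)).

(* Greedy colouring: choose the edges of colours 0, 1, ... one at a time.  An
   edge already chosen meets at most two edges of a matching (one through each
   of its endpoints), so after k choices at most 2k edges of the next colour
   class are blocked; a class with more than 2k edges still offers a free one. *)
From mathcomp Require Import all_boot.

Set Implicit Arguments.
Unset Strict Implicit.
Unset Printing Implicit Defensive.

Lemma card_bigcup_ord_le (T : finType) k (A : 'I_k -> {set T}) :
  #|\bigcup_(i < k) A i| <= \sum_(i < k) #|A i|.
Proof.
elim: k A => [|k IHk] A; first by rewrite big_ord0 cards0.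
rewrite !big_ord_recr /=; apply: leq_trans (leq_card_setU _ _) _.
by rewrite leq_add2r IHk.
Qed.

Section RainbowGreedy.

Variables U V : finType.
Implicit Types (e f : U * V) (M : {set U * V}).

Definition edge_disjoint e f := (e.1 != f.1) && (e.2 != f.2).

Lemma edge_disjointC e f : edge_disjoint e f = edge_disjoint f e.
Proof. by rewrite /edge_disjoint eq_sym [e.2 == _]eq_sym. Qed.

Lemma card_matching_shared_vertex_le1 M (P : pred (U * V)) :
  is_matching M -> (forall e f, P e -> P f -> (e.1 == f.1) || (e.2 == f.2)) ->
  #|[set e in M | P e]| <= 1.
Proof.
move=> matchM shareP; apply/card_le1_eqP => e f.
rewrite !inE => /andP[eM Pe] /andP[fM Pf]; apply/eqP; apply: contraT => neq_ef.
have [ne1 ne2] := matchM f e fM eM neq_ef.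
by move: (shareP f e Pf Pe); rewrite (negbTE ne1) (negbTE ne2).
Qed.

Lemma card_matching_meeting_le2 M e :
  is_matching M -> #|[set f in M | ~~ edge_disjoint f e]| <= 2.
Proof.
move=> matchM.
have -> : [set f in M | ~~ edge_disjoint f e] =
          [set f in M | f.1 == e.1] :|: [set f in M | f.2 == e.2].
  by apply/setP => f; rewrite !inE negb_and !negbK andb_orr.
apply: leq_trans (leq_card_setU _ _) _.
by rewrite -[2]/(1 + 1) leq_add // card_matching_shared_vertex_le1 // => f g
  /eqP-> /eqP->; rewrite eqxx ?orbT.
Qed.

Lemma matching_avoids_edges M k (g : 'I_k -> U * V) :
  is_matching M -> 2 * k < #|M| ->
  exists2 x, x \in M & forall j, edge_disjoint x (g j).
Proof.
move=> matchM ltM.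
pose blocked := \bigcup_(j < k) [set f in M | ~~ edge_disjoint f (g j)].
have card_blocked : #|blocked| <= 2 * k.
  apply: leq_trans (card_bigcup_ord_le _) _.
  rewrite mulnC -[k in k * 2]card_ord -sum_nat_const.
  by apply: leq_sum => j _; apply: card_matching_meeting_le2.
have /subsetPn[x xM x_free] : ~~ (M \subset blocked).
  by apply: contraTN ltM => /subset_leq_card le_M; rewrite -leqNgt (leq_trans le_M).
exists x => // j; apply: contraNT x_free => meet_j.
by apply/bigcupP; exists j => //; rewrite inE xM.
Qed.

Theorem rainbow_matching_greedy n (M : 'I_n -> {set U * V}) :
  (forall i, is_matching (M i)) -> (forall i : 'I_n, 2 * i < #|M i|) ->
  has_rainbow_matching_n M.
Proof.
elim: n M => [|n IHn] M matchM bigM.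
  by exists (fun i : 'I_0 => False_rect _ (notF (ltn_ord i))); split => -[].
have bigM_lift (i : 'I_n) : 2 * i < #|M (lift ord_max i)|.
  by rewrite -[i : nat](lift_max i) bigM.
have [f [fM f_disj]] := IHn _ (fun i => matchM (lift ord_max i)) bigM_lift.
have [x xM x_free] := matching_avoids_edges f (matchM ord_max) (bigM ord_max).
pose g i := if unlift ord_max i is Some j then f j else x.
exists g; split => [i|i j].
  by rewrite /g; case: unliftP => [j ->|->].
rewrite /g; case: unliftP => [a ->|->]; case: unliftP => [b ->|->].
- by rewrite (inj_eq lift_inj); apply: f_disj.
- by move=> _; apply/andP; rewrite -/(edge_disjoint _ _) edge_disjointC.
- by move=> _; apply/andP; apply: x_free.
- by rewrite eqxx.
Qed.

End RainbowGreedy.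

Theorem mainTheorem2 (U V : finType) (n : nat) (M : 'I_n -> {set U * V}) :
  1 <= n ->
  (forall i, is_matching (M i)) ->
  (forall i, 2 * n <= #|M i|) ->
  has_rainbow_matching_n M.
Proof.
move=> _ matchM bigM; apply: rainbow_matching_greedy => // i.
by apply: leq_trans (bigM i); rewrite ltn_pmul2l.
Qed.
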